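(* Let $\mathcal N$ be a finite set, $q$ a prime power, and $h\in\mathcal H[\mathcal N]$ almost $q$-representable. Let $\Delta=\{(k,\alpha):k\in\mathcal N,\ \alpha\subseteq\mathcal N,\ h(k\mid\alpha)=0\}$. Then there exists a sequence of weakly $q$-representable functions $h^\ell\in\mathcal H[\mathcal N]$ such that $\lim_{\ell\to\infty}h^\ell=h$ and $h^\ell(k\mid\alpha)=0$ for all positive integers $\ell$ and all $(k,\alpha)\in\Delta$.
   Context: $\mathcal H[\mathcal N]$ is the set of real functions on subsets of $\mathcal N$, with $h(\alpha\mid\beta)=h(\alpha\cup\beta)-h(\beta)$ and singletons identified with elements. $h$ is $q$-representable if there are subspaces $\mathbb U_i$ ($i\in\mathcal N$) of a finite-dimensional vector space over $GF(q)$ with $h(\alpha)=\dim\langle\mathbb U_i:i\in\alpha\rangle$ (dimension of the span) for every $\alpha\subseteq\mathcal N$; weakly $q$-representable if $ch$ is $q$-representable for some $c>0$; almost $q$-representable if it is the limit of a sequence of weakly $q$-representable functions. (In the paper $\mathcal N=\mathcal S\cup\mathcal E$ for a network coding problem.) *)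

From HB Require Import structures.
From mathcomp Require Import all_boot all_order all_algebra.
From mathcomp Require Import all_classical all_reals all_analysis.
Set Implicit Arguments. Unset Strict Implicit. Unset Printing Implicit Defensive.
Import Order.TTheory GRing.Theory Num.Theory.
Local Open Scope ring_scope.
Local Open Scope classical_set_scope.
Import numFieldNormedType.Exports.

(* Ground set N is a finite type T; H[N] = functions {set T} -> R. *)

Definition prime_power (q : nat) : Prop :=
  exists p k : nat, prime p /\ (0 < k)%N /\ q = (p ^ k)%N.

Definition hcond (R : realType) (T : finType) (h : {set T} -> R) (k : T) (A : {set T}) : R :=
  h (k |: A) - h A.

(* h is q-representable: subspaces U_i of a finite-dimensional vector space
   F^n over a field F with q elements (= GF(q)); each subspace is the row
   space of an n x n matrix, and h(A) = dim of the span of the U_i, i in A. *)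
Definition q_representable (R : realType) (T : finType) (q : nat) (h : {set T} -> R) : Prop :=
  exists (F : finFieldType) (n : nat) (U : T -> 'M[F]_n),
    #|F| = q /\ forall A : {set T}, h A = (\rank (\sum_(i in A) U i)%MS)%:R.

Definition weakly_q_representable (R : realType) (T : finType) (q : nat) (h : {set T} -> R) : Prop :=
  exists c : R, 0 < c /\ q_representable q (fun A => c * h A).

Definition converges_to (R : realType) (T : finType) (hs : nat -> {set T} -> R) (h : {set T} -> R) : Prop :=
  forall A : {set T}, (fun l : nat => hs l A) @ \oo --> h A.

Definition almost_q_representable (R : realType) (T : finType) (q : nat) (h : {set T} -> R) : Prop :=
  exists hs : nat -> {set T} -> R,
    (forall l, weakly_q_representable q (hs l)) /\ converges_to hs h.

From HB Require Import structures.
From mathcomp Require Import all_boot all_order all_algebra.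
From mathcomp Require Import all_classical all_reals all_analysis.
Import Order.TTheory GRing.Theory Num.Theory.
Import numFieldNormedType.Exports.
Set Implicit Arguments. Unset Strict Implicit. Unset Printing Implicit Defensive.
Local Open Scope ring_scope.
Local Open Scope classical_set_scope.

(* Given a representation [U] of [c * h_l], quotient the ambient space by the
   sum [D] of complements of [span A] in [U k] over the pairs [(k, A)] with
   [h(k | A) = 0].  Modulo [D], every such [U k] lies in [span A], so the new
   function has [h(k | A) = 0] exactly; and the rank of [D] is at most the sum
   of the conditional ranks [c * h_l(k | A)], which tend to [c * h(k | A) = 0].
   Hence the new functions are weakly representable, satisfy the
   constraints, and stay within that vanishing sum of [h_l]. *)

Section SpanRank.

Variables (F : fieldType) (n : nat) (T : finType).
Implicit Types (U : T -> 'M[F]_n) (k : T) (A : {set T}).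

Definition spanmx U A : 'M[F]_n := (\sum_(i in A) U i)%MS.

Lemma spanmx_sub1 U k A : (U k <= spanmx U (k |: A))%MS.
Proof. exact: (sumsmx_sup k) (setU11 k A) (submx_refl _). Qed.

Lemma spanmx_subU1 U k A : (spanmx U A <= spanmx U (k |: A))%MS.
Proof.
by apply/sumsmx_subP => i iA; apply: (sumsmx_sup i) => //; rewrite setU1r.
Qed.

Lemma spanmx_setU1 U k A : (spanmx U (k |: A) <= U k + spanmx U A)%MS.
Proof.
apply/sumsmx_subP => i; rewrite in_setU1 => /orP[/eqP->|iA].
  exact: addsmxSl.
exact: submx_trans (sumsmx_sup i iA (submx_refl _)) (addsmxSr _ _).
Qed.

Lemma mxrank_diff_spanmx U k A :
  (\rank (U k :\: spanmx U A) + \rank (spanmx U A) <= \rank (spanmx U (k |: A)))%N.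
Proof.
rewrite -mxrank_disjoint_sum ?capmx_diff //; apply: mxrankS.
by rewrite addsmx_sub (submx_trans (diffmxSl _ _) (spanmx_sub1 _ _ _)) spanmx_subU1.
Qed.

End SpanRank.

Lemma mxrank_mul_coker (F : fieldType) m n (X : 'M[F]_(m, n)) (D : 'M[F]_n) :
  (\rank (X *m cokermx D) + \rank D)%N = \rank (X + D)%MS.
Proof.
have eXD : (X *m cokermx D :=: (X + D)%MS *m cokermx D)%MS.
  apply/eqmxP/andP; split; first by rewrite submxMr // addsmxSl.
  by rewrite addsmxMr addsmx_sub submx_refl mulmx_coker sub0mx.
have ker_coker : (kermx (cokermx D) :=: D)%MS.
  apply/eqmxP/andP; split; first by rewrite submxE -sub_kermx submx_refl.
  by rewrite sub_kermx mulmx_coker.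
have capD : ((X + D)%MS :&: kermx (cokermx D) :=: D)%MS.
  apply: eqmx_trans (cap_eqmx (eqmx_refl _) ker_coker) _.
  by apply/capmx_idPr; rewrite addsmxSr.
by rewrite eXD -capD mxrank_mul_ker.
Qed.

Lemma mxrank_sums_leq (F : fieldType) n (I : finType) (P : pred I)
    (B : I -> 'M[F]_n) :
  (\rank (\sum_(i | P i) B i)%MS <= \sum_(i | P i) \rank (B i))%N.
Proof.
elim/big_rec2: _ => [|i r M _ IH]; first by rewrite mxrank0.
by apply: leq_trans (mxrank_adds_leqif _ _) _; rewrite leq_add2l.
Qed.

Section QuotientRepresentation.

Variables (F : fieldType) (n : nat) (T : finType).
Variables (U : T -> 'M[F]_n) (P : pred (T * {set T})).

Let rk A := \rank (spanmx U A).

Definition cond_defect : nat := \sum_(p | P p) (rk (p.1 |: p.2) - rk p.2).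

Definition killed_space : 'M[F]_n := (\sum_(p | P p) (U p.1 :\: spanmx U p.2))%MS.

Definition quotient_rep (i : T) : 'M[F]_n := U i *m cokermx killed_space.

Lemma mxrank_killed_space : (\rank killed_space <= cond_defect)%N.
Proof.
apply: leq_trans (mxrank_sums_leq _ _) _; apply: leq_sum => p _.
have rk_diff := mxrank_diff_spanmx U p.1 p.2.
rewrite leq_subRL; first by rewrite addnC.
exact: leq_trans (leq_addl _ _) rk_diff.
Qed.

Lemma mxrank_quotient_rep A :
  (\rank (spanmx quotient_rep A) + \rank killed_space)%N
  = \rank (spanmx U A + killed_space)%MS.
Proof. by rewrite -mxrank_mul_coker (sumsmxMr _ _ (cokermx killed_space)). Qed.

Lemma mxrank_quotient_rep_le A : (\rank (spanmx quotient_rep A) <= rk A)%N.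
Proof.
rewrite -(leq_add2r (\rank killed_space)) mxrank_quotient_rep.
exact: mxrank_adds_leqif.
Qed.

Lemma mxrank_quotient_rep_ge A :
  (rk A <= \rank (spanmx quotient_rep A) + cond_defect)%N.
Proof.
apply: leq_trans (leq_add (leqnn _) mxrank_killed_space).
by rewrite mxrank_quotient_rep mxrankS ?addsmxSl.
Qed.

Lemma quotient_rep_cond0 k A : P (k, A) ->
  \rank (spanmx quotient_rep (k |: A)) = \rank (spanmx quotient_rep A).
Proof.
move=> PkA; apply/eqP.
rewrite -(eqn_add2r (\rank killed_space)) !mxrank_quotient_rep; apply/eqP.
apply/eqmx_rank/andP; split; last by rewrite addsmxS ?spanmx_subU1.
have Ukill : (U k :\: spanmx U A <= killed_space)%MS.
  exact: (sumsmx_sup (k, A)) PkA (submx_refl _).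
have Uk : (U k <= spanmx U A + killed_space)%MS.
  by rewrite -(addsmx_diff_cap_eq (U k) (spanmx U A)) addsmxC addsmxS ?capmxSr.
rewrite addsmx_sub addsmxSr andbT (submx_trans (spanmx_setU1 _ _ _)) //.
by rewrite addsmx_sub Uk addsmxSl.
Qed.

End QuotientRepresentation.

Lemma weakly_representable_cond0 (R : realType) (T : finType) (q : nat)
    (P : pred (T * {set T})) (g : {set T} -> R) :
  weakly_q_representable q g ->
  exists g' : {set T} -> R,
    [/\ weakly_q_representable q g',
        forall A, `|g' A - g A| <= \sum_(p | P p) hcond g p.1 p.2 &
        forall k A, P (k, A) -> hcond g' k A = 0].
Proof.
case=> c [c_gt0 [F [n [U [cardF gE]]]]].
have gU A : g A = (\rank (spanmx U A))%:R / c by rewrite -gE mulrC mulKf ?gt_eqF.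
pose V := quotient_rep U P.
exists (fun A => (\rank (spanmx V A))%:R / c); split.
- exists c; split => //; exists F, n, V; split => // A.
  by rewrite mulrC divfK ?gt_eqF.
- move=> A; rewrite gU -mulrBl.
  under eq_bigr do rewrite /hcond !gU -mulrBl.
  rewrite -mulr_suml normrM (gtr0_norm (_ : 0 < c^-1)) ?invr_gt0 //.
  rewrite ler_pM2r ?invr_gt0 // distrC ger0_norm ?subr_ge0 ?ler_nat.
    under eq_bigr do rewrite -natrB ?mxrankS ?spanmx_subU1 //.
    by rewrite -natr_sum lerBlDr -natrD ler_nat addnC mxrank_quotient_rep_ge.
  exact: mxrank_quotient_rep_le.
- by move=> k A PkA; rewrite /hcond quotient_rep_cond0 // subrr.
Qed.

Lemma cvg_dist_le (R : realType) (f g e : nat -> R) (a : R) :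
  (forall l, `|g l - f l| <= e l) ->
  f @ \oo --> a -> e @ \oo --> 0 -> g @ \oo --> a.
Proof.
move=> gfe fa e0.
have gf0 : (fun l => g l - f l) @ \oo --> 0.
  apply: (squeeze_cvgr (f := fun l => - e l) (h := e)) => //.
  - by apply: nearW => l; rewrite -ler_norml.
  - by rewrite -oppr0; apply: cvgN.
rewrite -[a]addr0 (_ : g = (fun l => f l + (g l - f l))).
  exact: cvgD.
by apply: funext => l; rewrite addrC subrK.
Qed.

Theorem proposition5 (R : realType) (T : finType) (q : nat) (h : {set T} -> R) :
  prime_power q -> almost_q_representable q h ->
  exists hs : nat -> {set T} -> R,
    (forall l, weakly_q_representable q (hs l)) /\
    converges_to hs h /\
    (forall (l : nat) (k : T) (A : {set T}), hcond h k A = 0 -> hcond (hs l) k A = 0).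
Proof.
move=> _ [hs [hs_rep hs_h]].
pose P (p : T * {set T}) := hcond h p.1 p.2 == 0.
have /choice[g gP] := fun l => weakly_representable_cond0 P (hs_rep l).
exists g; split; [by move=> l; case: (gP l) | split]; last first.
  by move=> l k A /eqP hkA; case: (gP l) => _ _ ->.
have defect0 : (fun l => \sum_(p | P p) hcond (hs l) p.1 p.2) @ \oo --> 0.
  have defect_cvg : (fun l => \sum_(p | P p) hcond (hs l) p.1 p.2) @ \oo -->
      \sum_(p | P p) hcond h p.1 p.2.
    apply: (@cvg_big _ _ +%R 0 P add_continuous _ \oo (index_enum _)
      (fun p l => hcond (hs l) p.1 p.2) _ eventually_filter) => p _.
    by apply: cvgB; exact: hs_h.
  by rewrite big1 // in defect_cvg => p /eqP.
by move=> A; apply: (cvg_dist_le _ (hs_h A) defect0) => l; case: (gP l).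
Qed.
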